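(* For every history formula $\varphi$ of CTL*KΔ, every model $M$, every history $h$ of $M$ and every observation record $r$ that stops at $h$: $$h,r\models\varphi\quad\text{iff}\quad \mathit{last}(h),\ \mathit{IS}(h,r),\ o(h,r)\models_I\varphi.$$
   Context: Fix a countably infinite set $\mathit{AP}$ of atomic propositions and a finite nonempty set $\mathit{Obs}$ of observations. For a word $w$ we write $w_i$ for its letter at position $i$ (positions start at $0$), $w_{\le i}$ for its prefix ending at position $i$, $w_{\ge i}$ for its suffix starting at position $i$, $|w|$ for the length of a finite word, and $\mathit{last}(w)$ for the last letter of a finite word; $w\preceq w'$ means $w$ is a prefix of $w'$. Syntax of CTL*KΔ (single agent): history formulas $\varphi::=p\mid\neg\varphi\mid\varphi\wedge\varphi\mid\mathbf A\psi\mid\mathbf K\varphi\mid\Delta^{o}\varphi$ and path formulas $\psi::=\varphi\mid\neg\psi\mid\psi\wedge\psi\mid\mathbf X\psi\mid\psi\,\mathbf U\,\psi$, with $p\in\mathit{AP}$ and $o\in\mathit{Obs}$; the formulas of the logic are the history formulas. A model is $M=(\mathit{AP}_f,S,T,V,\{\sim_o\}_{o\in\mathit{Obs}},s_\iota,o_\iota)$ where $\mathit{AP}_f\subseteq\mathit{AP}$ is finite, $S$ is a finite set of states, $T\subseteq S\times S$ is left-total, $V:S\to 2^{\mathit{AP}_f}$, each $\sim_o$ is an equivalence relation on $S$, $s_\iota\in S$ and $o_\iota\in\mathit{Obs}$. A path is an infinite sequence $\pi=s_0s_1\dots$ of states with $s_i\,T\,s_{i+1}$ for all $i$ (starting at any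 state); a history is a finite nonempty prefix of a path. An observation record is a finite word over $\mathit{Obs}\times\mathbb N$; $\epsilon$ is the empty record, $r\cdot(o,n)$ is $r$ with $(o,n)$ appended, and $r_{=n}$ is the subword of $r$ consisting of the pairs whose second component is $n$. The record $r$ stops at $n$ if $r_{=m}$ is empty for all $m>n$, and stops at a history $h$ if it stops at $|h|-1$. The list $\mathit{ol}(r,n)$ is defined by $\mathit{ol}(r,0)=o_\iota\cdot o_1\cdots o_k$ if $r_{=0}=(o_1,0)\cdots(o_k,0)$, and $\mathit{ol}(r,n+1)=\mathit{last}(\mathit{ol}(r,n))\cdot o_1\cdots o_k$ if $r_{=n+1}=(o_1,n+1)\cdots(o_k,n+1)$. Two histories are equivalent, $h\approx_r h'$, if $|h|=|h'|$ and for every $i<|h|$ and every $o$ occurring in $\mathit{ol}(r,i)$, $h_i\sim_o h'_i$. Natural semantics: for a history $h$ and record $r$: $h,r\models p$ iff $p\in V(\mathit{last}(h))$; $h,r\models\neg\varphi$ iff not $h,r\models\varphi$; $h,r\models\varphi_1\wedge\varphi_2$ iff both hold; $h,r\models\mathbf A\psi$ iff for all paths $\pi$ with $h\preceq\pi$, $\pi,|h|-1,r\models\psi$; $h,r\models\mathbf K\varphi$ iff $h',r\models\varphi$ for all histories $h'$ with $h'\approx_r h$; $h,r\models\Delta^o\varphi$ iff $h,r\cdot(o,|h|-1)\models\varphi$. For a path $\pi$, $n\in\mathbb N$ and record $r$: $\pi,n,r\models\varphi$ iff $\pi_{\le n},r\models\varphi$; negation and conjunction as usual; $\pi,n,r\models\mathbf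 X\psi$ iff $\pi,n+1,r\models\psi$; $\pi,n,r\models\psi_1\mathbf U\psi_2$ iff there is $m\ge n$ with $\pi,m,r\models\psi_2$ and $\pi,k,r\models\psi_1$ for all $n\le k<m$. For $I\subseteq S$, $T(I)=\{s'\mid\exists s\in I,\ s\,T\,s'\}$; $[s]_o=\{s'\mid s\sim_o s'\}$. The information set is $\mathit{IS}(h,r)=\{\mathit{last}(h')\mid h'\text{ a history with }h'\approx_r h\}$. Updates: $U_T(I,s',o)=T(I)\cap[s']_o$ and $U_\Delta(I,s,o')=I\cap[s]_{o'}$. $o(h,r)$ denotes the last element of $\mathit{ol}(r,|h|-1)$. Alternative semantics, for $s\in S$, $I\subseteq S$, $o\in\mathit{Obs}$: $s,I,o\models_I p$ iff $p\in V(s)$; negation and conjunction as usual; $s,I,o\models_I\mathbf A\psi$ iff for every path $\pi$ with $\pi_0=s$, $\pi,I,o\models_I\psi$; $s,I,o\models_I\mathbf K\varphi$ iff $s',I,o\models_I\varphi$ for all $s'\in I$; $s,I,o\models_I\Delta^{o'}\varphi$ iff $s,U_\Delta(I,s,o'),o'\models_I\varphi$. For a path $\pi$: $\pi,I,o\models_I\varphi$ iff $\pi_0,I,o\models_I\varphi$; negation and conjunction as usual; $\pi,I,o\models_I\mathbf X\psi$ iff $\pi_{\ge1},U_T(I,\pi_1,o),o\models_I\psi$; $\pi,I,o\models_I\psi_1\mathbf U\psi_2$ iff there is $n\ge0$ with $\pi_{\ge n},U_T^n(I,\pi,o),o\models_I\psi_2$ and $\pi_{\ge m},U_T^m(I,\pi,o),o\models_I\psi_1$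 for all $0\le m<n$, where $U_T^0(I,\pi,o)=I$ and $U_T^{n+1}(I,\pi,o)=U_T(U_T^n(I,\pi,o),\pi_{n+1},o)$. *)

From mathcomp Require Import all_boot.
Set Implicit Arguments. Unset Strict Implicit. Unset Printing Implicit Defensive.

(* Atomic propositions: AP := nat (countably infinite).
   Observations: a finite type Obs (nonempty since every model has o_init). *)

Record model (Obs : finType) := Model {
  APf : seq nat;
  St : finType;
  Tr : rel St;
  Tr_total : forall s, exists s', Tr s s';
  Val : St -> nat -> bool;
  Val_APf : forall s p, Val s p -> p \in APf;      (* V : S -> 2^{AP_f} *)
  sim : Obs -> rel St;
  sim_refl : forall o s, sim o s s;
  sim_sym : forall o s t, sim o s t -> sim o t s;
  sim_trans : forall o s t u, sim o s t -> sim o t u -> sim o s u;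
  s_init : St;
  o_init : Obs
}.
Arguments St {Obs}.
Arguments Tr {Obs} m.
Arguments Val {Obs} m.
Arguments sim {Obs} m.
Arguments s_init {Obs} m.
Arguments o_init {Obs} m.

Inductive hform (Obs : Type) : Type :=
  | HAtom : nat -> hform Obs
  | HNot : hform Obs -> hform Obs
  | HAnd : hform Obs -> hform Obs -> hform Obs
  | HA : pform Obs -> hform Obs
  | HK : hform Obs -> hform Obs
  | HDelta : Obs -> hform Obs -> hform Obs
with pform (Obs : Type) : Type :=
  | PH : hform Obs -> pform Obs
  | PNot : pform Obs -> pform Obs
  | PAnd : pform Obs -> pform Obs -> pform Obs
  | PX : pform Obs -> pform Obs
  | PU : pform Obs -> pform Obs -> pform Obs.

Section Semantics.
Variables (Obs : finType) (M : model Obs).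
Local Notation S := (St M).

(* Histories: finite nonempty T-sequences (= finite nonempty prefixes of paths,
   since T is left-total). Positions start at 0. *)
Definition hnth (h : seq S) (i : nat) : S := nth (s_init M) h i.
Definition hlast (h : seq S) : S := last (s_init M) h.

Definition is_history (h : seq S) : Prop :=
  h <> [::] /\ forall i, i.+1 < size h -> Tr M (hnth h i) (hnth h i.+1).

Definition is_path (pi : nat -> S) : Prop := forall i, Tr M (pi i) (pi i.+1).

Definition hprefix (h : seq S) (pi : nat -> S) : Prop :=
  forall i, i < size h -> pi i = hnth h i.

Definition prefix_upto (pi : nat -> S) (n : nat) : seq S := mkseq pi n.+1.

Definition suffix_from (pi : nat -> S) (n : nat) : nat -> S := fun i => pi (n + i).

Definition record := seq (Obs * nat).

Definition obs_at (r : record) (n : nat) : seq Obs :=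
  [seq x.1 | x <- r & x.2 == n].

Definition stops_at (r : record) (n : nat) : Prop :=
  forall m, n < m -> obs_at r m = [::].

Definition stops_at_hist (r : record) (h : seq S) : Prop :=
  stops_at r (size h).-1.

Fixpoint ol (r : record) (n : nat) : seq Obs :=
  match n with
  | 0 => o_init M :: obs_at r 0
  | n'.+1 => last (o_init M) (ol r n') :: obs_at r n
  end.

Definition hequiv (r : record) (h h' : seq S) : Prop :=
  size h = size h' /\
  forall i, i < size h -> forall o, o \in ol r i -> sim M o (hnth h i) (hnth h' i).

Fixpoint hsat (h : seq S) (r : record) (phi : hform Obs) {struct phi} : Prop :=
  match phi with
  | HAtom p => Val M (hlast h) p
  | HNot phi1 => ~ hsat h r phi1
  | HAnd phi1 phi2 => hsat h r phi1 /\ hsat h r phi2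
  | HA psi => forall pi, is_path pi -> hprefix h pi -> psat pi (size h).-1 r psi
  | HK phi1 => forall h', is_history h' -> hequiv r h' h -> hsat h' r phi1
  | HDelta o phi1 => hsat h (rcons r (o, (size h).-1)) phi1
  end
with psat (pi : nat -> S) (n : nat) (r : record) (psi : pform Obs) {struct psi} : Prop :=
  match psi with
  | PH phi => hsat (prefix_upto pi n) r phi
  | PNot psi1 => ~ psat pi n r psi1
  | PAnd psi1 psi2 => psat pi n r psi1 /\ psat pi n r psi2
  | PX psi1 => psat pi n.+1 r psi1
  | PU psi1 psi2 => exists m, n <= m /\ psat pi m r psi2 /\
                      forall k, n <= k -> k < m -> psat pi k r psi1
  end.

Definition Tset (I : S -> Prop) : S -> Prop := fun s' => exists s, I s /\ Tr M s s'.
Definition eqclass (s : S) (o : Obs) : S -> Prop := fun s' => sim M o s s'.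

Definition UT (I : S -> Prop) (s' : S) (o : Obs) : S -> Prop :=
  fun x => Tset I x /\ eqclass s' o x.
Definition UD (I : S -> Prop) (s : S) (o' : Obs) : S -> Prop :=
  fun x => I x /\ eqclass s o' x.

Fixpoint UTn (n : nat) (I : S -> Prop) (pi : nat -> S) (o : Obs) : S -> Prop :=
  match n with
  | 0 => I
  | n'.+1 => UT (UTn n' I pi o) (pi n) o
  end.

Definition IS (h : seq S) (r : record) : S -> Prop :=
  fun s => exists h', is_history h' /\ hequiv r h' h /\ hlast h' = s.

Definition ohr (h : seq S) (r : record) : Obs := last (o_init M) (ol r (size h).-1).

Fixpoint isat (s : S) (I : S -> Prop) (o : Obs) (phi : hform Obs) {struct phi} : Prop :=
  match phi with
  | HAtom p => Val M s p
  | HNot phi1 => ~ isat s I o phi1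
  | HAnd phi1 phi2 => isat s I o phi1 /\ isat s I o phi2
  | HA psi => forall pi, is_path pi -> pi 0 = s -> ipsat pi I o psi
  | HK phi1 => forall s', I s' -> isat s' I o phi1
  | HDelta o' phi1 => isat s (UD I s o') o' phi1
  end
with ipsat (pi : nat -> S) (I : S -> Prop) (o : Obs) (psi : pform Obs) {struct psi} : Prop :=
  match psi with
  | PH phi => isat (pi 0) I o phi
  | PNot psi1 => ~ ipsat pi I o psi1
  | PAnd psi1 psi2 => ipsat pi I o psi1 /\ ipsat pi I o psi2
  | PX psi1 => ipsat (suffix_from pi 1) (UT I (pi 1) o) o psi1
  | PU psi1 psi2 => exists n, ipsat (suffix_from pi n) (UTn n I pi o) o psi2 /\
                      forall m, m < n -> ipsat (suffix_from pi m) (UTn m I pi o) o psi1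
  end.

End Semantics.

(** The two semantics are linked by the invariant that, for a record stopping
   at [h], the pair [(IS h r, o(h,r))] summarises everything the natural
   semantics can still observe: a [Delta^o] step intersects the information
   set with [[last h]_o] and makes [o] current, while extending a history by a
   state [s'] (at which the record is silent) intersects the [T]-successors of
   the information set with [[s']_o] for the current [o].  Hence the
   information sets along a path computed by [UTn] coincide with the
   information sets of its prefixes, and the theorem follows by mutual
   induction on history and path formulas. *)
From Stdlib Require Import FunctionalExtensionality PropExtensionality.
From mathcomp Require Import all_boot zify.
Set Implicit Arguments. Unset Strict Implicit. Unset Printing Implicit Defensive.

Section InformationSets.
Variables (Obs : finType) (M : model Obs).
Local Notation S := (St M).
Implicit Types (h : seq S) (r : record Obs) (pi : nat -> S).

Lemma hequiv_sym r h h' : hequiv r h h' -> hequiv r h' h.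
Proof. by case=> Hs E; split=> // i; rewrite -Hs => Hi o Ho; apply/sim_sym/E. Qed.

Lemma hequiv_trans r h1 h2 h3 : hequiv r h1 h2 -> hequiv r h2 h3 -> hequiv r h1 h3.
Proof.
case=> Hs1 E1 [Hs2 E2]; split; first by rewrite Hs1.
move=> i Hi o Ho; apply: sim_trans (E1 i Hi o Ho) _.
by apply: E2; rewrite -?Hs1.
Qed.

Lemma IS_hequiv r h h' : hequiv r h h' -> IS h r = IS h' r.
Proof.
move=> E; apply: functional_extensionality => s; apply: propositional_extensionality.
split=> -[h0 [Hh0 [E0 L]]]; exists h0; split=> //; split=> //.
- exact: hequiv_trans E0 E.
- exact: hequiv_trans E0 (hequiv_sym E).
Qed.

Lemma hlast_nth h : hlast h = hnth h (size h).-1.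
Proof. by rewrite /hlast /hnth nth_last. Qed.

Lemma hnth_rcons h x i : i < size h -> hnth (rcons h x) i = hnth h i.
Proof. by move=> Hi; rewrite /hnth nth_rcons Hi. Qed.

Lemma hnth_rcons_size h x : hnth (rcons h x) (size h) = x.
Proof. by rewrite /hnth nth_rcons ltnn eqxx. Qed.

Lemma hlast_rcons h x : hlast (rcons h x) = x.
Proof. exact: last_rcons. Qed.

Lemma stops_at_mono r n m : n <= m -> stops_at r n -> stops_at r m.
Proof. by move=> Hnm H k Hk; apply: H; apply: leq_ltn_trans Hk. Qed.

Lemma obs_at_rcons r o n m :
  obs_at (rcons r (o, n)) m = if n == m then rcons (obs_at r m) o else obs_at r m.
Proof. by rewrite /obs_at filter_rcons /=; case: (n == m); rewrite ?map_rcons. Qed.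

Lemma ol_rcons_lt r o n i : i < n -> ol M (rcons r (o, n)) i = ol M r i.
Proof.
elim: i => [|i IH] Hi /=; rewrite obs_at_rcons; case: eqP => [E|_]; try lia.
- by [].
- by rewrite IH //; lia.
Qed.

Lemma ol_rcons r o n : ol M (rcons r (o, n)) n = rcons (ol M r n) o.
Proof. by case: n => [|n] /=; rewrite obs_at_rcons eqxx ?ol_rcons_lt. Qed.

Lemma stops_at_rcons r o n : stops_at r n -> stops_at (rcons r (o, n)) n.
Proof. by move=> H m Hm; rewrite obs_at_rcons; case: eqP => [E|_]; [lia | apply: H]. Qed.

Lemma hequiv_rcons_record r o h h' :
  h <> [::] ->
  hequiv (rcons r (o, (size h).-1)) h' h <->
  hequiv r h' h /\ sim M o (hnth h' (size h).-1) (hnth h (size h).-1).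
Proof.
move=> Hne; have Hs : (size h).-1 < size h by case: h Hne.
have ol_last o' : (o' \in ol M (rcons r (o, (size h).-1)) (size h).-1)
                    = (o' == o) || (o' \in ol M r (size h).-1).
  by rewrite ol_rcons mem_rcons in_cons.
split=> [[Hs' E] | [[Hs' E] Ho]].
- split; last by apply: E; rewrite ?Hs' // ol_last eqxx.
  split=> // i Hi o' Ho'; apply: E => //.
  have [Hlt|Hge] := ltnP i (size h).-1; first by rewrite ol_rcons_lt.
  have Ei : i = (size h).-1 by lia.
  by rewrite Ei ol_last -Ei Ho' orbT.
- split=> // i Hi o'.
  have [Hlt|Hge] := ltnP i (size h).-1; first by rewrite ol_rcons_lt //; apply: E.
  have -> : i = (size h).-1 by lia.
  by rewrite ol_last => /orP[/eqP -> // | Ho']; apply: E; rewrite ?Hs'.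
Qed.

Lemma IS_Delta r o h :
  h <> [::] -> IS h (rcons r (o, (size h).-1)) = UD (IS h r) (hlast h) o.
Proof.
move=> Hne; apply: functional_extensionality => s; apply: propositional_extensionality.
rewrite /UD /eqclass; split.
- case=> h' [Hh' [/(hequiv_rcons_record _ _ _ Hne) [E Ho] <-]].
  split; first by exists h'.
  by rewrite !hlast_nth (proj1 E); apply: sim_sym.
- case=> -[h' [Hh' [E <-]]] Ho; exists h'; split=> //; split=> //.
  apply/(hequiv_rcons_record _ _ _ Hne); split=> //.
  by move: Ho; rewrite !hlast_nth (proj1 E); apply: sim_sym.
Qed.

Lemma ohr_Delta r o h : ohr h (rcons r (o, (size h).-1)) = o.
Proof. by rewrite /ohr ol_rcons last_rcons. Qed.

Lemma is_history_rcons h x :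
  h <> [::] -> is_history (rcons h x) <-> is_history h /\ Tr M (hlast h) x.
Proof.
move=> Hne; have Hs : size h = (size h).-1.+1 by case: h Hne.
split=> [[_ H] | [[_ H] Ht]].
- split.
  + split=> // i Hi; have := H i; rewrite !hnth_rcons //; last lia.
    by apply; rewrite size_rcons; lia.
  + rewrite hlast_nth -(hnth_rcons x); last lia.
    have := H (size h).-1; rewrite -Hs hnth_rcons_size; apply; rewrite size_rcons; lia.
- split; first by move=> /(f_equal size); rewrite size_rcons.
  move=> i; rewrite size_rcons => Hi.
  have [Hlt|Hge] := ltnP i.+1 (size h).
  + by rewrite (hnth_rcons _ Hlt) (hnth_rcons _ (ltnW Hlt)); apply: H.
  + have Ei : i = (size h).-1 by lia.
    by rewrite Ei -Hs hnth_rcons_size hnth_rcons -?hlast_nth //; lia.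
Qed.

Lemma ol_silent r h : h <> [::] -> obs_at r (size h) = [::] ->
  ol M r (size h) = [:: ohr h r].
Proof. by case: h => // a h _ /= ->. Qed.

Lemma ohr_rcons r h x : h <> [::] -> obs_at r (size h) = [::] ->
  ohr (rcons h x) r = ohr h r.
Proof. by move=> Hne Hobs; rewrite {1}/ohr size_rcons /= ol_silent. Qed.

Lemma IS_rcons r h x : h <> [::] -> obs_at r (size h) = [::] ->
  IS (rcons h x) r = UT (IS h r) x (ohr h r).
Proof.
move=> Hne Hobs; have Hol := ol_silent Hne Hobs.
apply: functional_extensionality => s; apply: propositional_extensionality.
rewrite /UT /Tset /eqclass; split.
- case=> h' [Hh' [[Hs E] L]].
  case/lastP: h' Hh' Hs E L => [|h'' y] Hh'; rewrite !size_rcons // => -[Hs] E.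
  have Hne'' : h'' <> [::] by move=> E0; apply: Hne; apply/size0nil; rewrite -Hs E0.
  rewrite hlast_rcons => Ey; subst y.
  case/(is_history_rcons _ Hne''): Hh' => Hh'' Ht; split.
  + exists (hlast h''); split=> //; exists h''; split=> //; split=> //; split=> // i Hi o Ho.
    rewrite -(hnth_rcons s Hi) -(hnth_rcons x (_ : i < size h)) -?Hs //.
    by apply: E => //; lia.
  + apply: sim_sym; have := E (size h'') _ (ohr h r).
    by rewrite hnth_rcons_size Hs hnth_rcons_size Hol mem_head; apply.
- case=> -[s0 [[h'' [Hh'' [[Hs E] L]]] Ht]] Hsim.
  have Hne'' : h'' <> [::] by move=> E0; apply: Hne; apply/size0nil; rewrite -Hs E0.
  exists (rcons h'' s); split; first by apply/is_history_rcons; rewrite // L.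
  split; last exact: hlast_rcons.
  split=> [|i]; first by rewrite !size_rcons Hs.
  rewrite size_rcons => Hi o Ho; have [Hlt|Hge] := ltnP i (size h'').
  + by rewrite !hnth_rcons -?Hs //; apply: E.
  + have Ei : i = size h'' by lia.
    move: Ho; rewrite Ei hnth_rcons_size Hs hnth_rcons_size Hol mem_seq1.
    by move=> /eqP ->; apply: sim_sym.
Qed.

Lemma size_prefix_upto pi n : size (prefix_upto pi n) = n.+1.
Proof. exact: size_mkseq. Qed.

Lemma prefix_upto_neq_nil pi n : prefix_upto pi n <> [::].
Proof. by move=> /(f_equal size); rewrite size_prefix_upto. Qed.

Lemma hnth_prefix_upto pi n i : i <= n -> hnth (prefix_upto pi n) i = pi i.
Proof. by move=> Hi; rewrite /hnth /prefix_upto nth_mkseq. Qed.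

Lemma hlast_prefix_upto pi n : hlast (prefix_upto pi n) = pi n.
Proof. by rewrite hlast_nth size_prefix_upto hnth_prefix_upto. Qed.

Lemma prefix_upto_history pi n : is_path pi -> is_history (prefix_upto pi n).
Proof.
move=> Hp; split=> [|i]; first exact: prefix_upto_neq_nil.
by rewrite size_prefix_upto ltnS => Hi; rewrite !hnth_prefix_upto // ltnW.
Qed.

Lemma prefix_upto_hprefix h pi n :
  size h = n.+1 -> hprefix h pi -> prefix_upto pi n = h.
Proof.
move=> Hs Hp; apply: (@eq_from_nth _ (s_init M)) => [|i]; first by rewrite size_prefix_upto.
by rewrite size_prefix_upto => Hi; rewrite -/(hnth _ i) hnth_prefix_upto // Hp // Hs.
Qed.

Lemma suffix_from_add pi n k : suffix_from (suffix_from pi n) k = suffix_from pi (n + k).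
Proof. by apply: functional_extensionality => i; rewrite /suffix_from addnA. Qed.

Lemma IS_prefix_upto_S r pi n : stops_at r n ->
  IS (prefix_upto pi n.+1) r = UT (IS (prefix_upto pi n) r) (pi n.+1) (ohr (prefix_upto pi n) r)
  /\ ohr (prefix_upto pi n.+1) r = ohr (prefix_upto pi n) r.
Proof.
move=> Hr; have Hobs : obs_at r (size (prefix_upto pi n)) = [::].
  by rewrite size_prefix_upto; apply: Hr.
by rewrite /prefix_upto mkseqS; split; [apply: IS_rcons | apply: ohr_rcons];
   rewrite // -/(prefix_upto pi n); apply: prefix_upto_neq_nil.
Qed.

Lemma UTn_prefix_upto r pi n k : stops_at r n ->
  UTn k (IS (prefix_upto pi n) r) (suffix_from pi n) (ohr (prefix_upto pi n) r)
    = IS (prefix_upto pi (n + k)) r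
  /\ ohr (prefix_upto pi (n + k)) r = ohr (prefix_upto pi n) r.
Proof.
move=> Hr; elim: k => [|k [IH1 IH2]]; first by rewrite addn0.
have [E1 E2] := IS_prefix_upto_S pi (stops_at_mono (leq_addr k n) Hr).
by rewrite /= IH1 -IH2 /suffix_from !addnS E1 E2 IH2.
Qed.

Lemma history_path_extension h pi' :
  is_history h -> is_path pi' -> pi' 0 = hlast h ->
  exists2 pi, is_path pi /\ hprefix h pi & suffix_from pi (size h).-1 = pi'.
Proof.
case=> Hne Hh Hp' H0; have Hs : size h = (size h).-1.+1 by case: (h) Hne.
set n := (size h).-1 in Hs *.
exists (fun i => if i < n then hnth h i else pi' (i - n)); first split.
- move=> i; case: ifP => A; case: ifP => B; try lia.
  + by apply: Hh; rewrite Hs; lia.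
  + have Ei : n = i.+1 by lia.
    by rewrite Ei subnn H0 hlast_nth Hs /= Ei; apply: Hh; rewrite Hs; lia.
  + by rewrite subSn; [apply: Hp' | lia].
- move=> i; rewrite Hs => Hi; case: ifP => A //.
  have -> : i = n by lia.
  by rewrite subnn H0 hlast_nth Hs.
- by apply: functional_extensionality => i; rewrite /suffix_from ltnNge leq_addr addKn.
Qed.

Lemma suffix_from_path pi n : is_path pi -> is_path (suffix_from pi n).
Proof. by move=> Hp i; rewrite /suffix_from addnS; apply: Hp. Qed.

End InformationSets.

Lemma exists_until_shift (P Q : nat -> Prop) n :
  (exists m, n <= m /\ Q m /\ forall k, n <= k -> k < m -> P k) <->
  (exists k, Q (n + k) /\ forall j, j < k -> P (n + j)).
Proof.
split=> [[m [Hnm [HQ HP]]] | [k [HQ HP]]].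
- by exists (m - n); rewrite subnKC //; split=> // j Hj; apply: HP; lia.
- exists (n + k); do !split=> //; first exact: leq_addr.
  by move=> j Hnj Hj; rewrite -(subnKC Hnj); apply: HP; lia.
Qed.

Scheme hform_ind_mut := Induction for hform Sort Prop
  with pform_ind_mut := Induction for pform Sort Prop.
Combined Scheme form_ind_mut from hform_ind_mut, pform_ind_mut.

Section Agreement.
Variables (Obs : finType) (M : model Obs).
Local Notation S := (St M).

Definition hsat_agrees (phi : hform Obs) := forall (h : seq S) (r : record Obs),
  is_history h -> stops_at_hist r h ->
  (hsat h r phi <-> isat (hlast h) (IS h r) (ohr h r) phi).

Definition psat_agrees (psi : pform Obs) := forall (pi : nat -> S) n (r : record Obs),
  is_path pi -> stops_at r n ->
  (psat pi n r psi <->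
   ipsat (suffix_from pi n) (IS (prefix_upto pi n) r) (ohr (prefix_upto pi n) r) psi).

Lemma psat_agrees_shift psi (pi : nat -> S) n (r : record Obs) k :
  psat_agrees psi -> is_path pi -> stops_at r n ->
  (psat pi (n + k) r psi <->
   ipsat (suffix_from (suffix_from pi n) k)
     (UTn k (IS (prefix_upto pi n) r) (suffix_from pi n) (ohr (prefix_upto pi n) r))
     (ohr (prefix_upto pi n) r) psi).
Proof.
move=> IH Hp Hr; have [E1 E2] := UTn_prefix_upto pi k Hr.
by rewrite suffix_from_add E1 -E2; apply: IH; last exact: stops_at_mono (leq_addr k n) Hr.
Qed.

Lemma hsat_agrees_A psi : psat_agrees psi -> hsat_agrees (HA psi).
Proof.
move=> IH h r Hh; rewrite /stops_at_hist => Hr /=.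
have Hs : size h = (size h).-1.+1 by case: (h) (proj1 Hh).
split=> [H pi' Hp' H0 | H pi Hp Hpre].
- have [pi [Hp Hpre] <-] := history_path_extension Hh Hp' H0.
  by move/(IH pi _ r Hp Hr): (H pi Hp Hpre); rewrite (prefix_upto_hprefix Hs Hpre).
- apply/(IH pi _ r Hp Hr); rewrite (prefix_upto_hprefix Hs Hpre).
  apply: H; first exact: suffix_from_path.
  by rewrite /suffix_from addn0 hlast_nth Hpre // {2}Hs.
Qed.

Lemma hsat_agrees_K phi : hsat_agrees phi -> hsat_agrees (HK phi).
Proof.
move=> IH h r Hh Hr /=.
have Hr' h' : hequiv r h' h -> stops_at_hist r h' by move=> E; rewrite /stops_at_hist (proj1 E).
split=> [H s' [h' [Hh' [E <-]]] | H h' Hh' E].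
- have := (IH h' r Hh' (Hr' h' E)).1 (H h' Hh' E).
  by rewrite (IS_hequiv E) /ohr (proj1 E).
- apply/(IH h' r Hh' (Hr' h' E)); rewrite (IS_hequiv E) /ohr (proj1 E).
  by apply: H; exists h'.
Qed.

Lemma sat_agree : (forall phi, hsat_agrees phi) /\ (forall psi, psat_agrees psi).
Proof.
apply: form_ind_mut.
- by [].
- by move=> phi IH h r Hh Hr /=; rewrite (IH h r Hh Hr).
- by move=> phi1 IH1 phi2 IH2 h r Hh Hr /=; rewrite (IH1 h r Hh Hr) (IH2 h r Hh Hr).
- exact: hsat_agrees_A.
- exact: hsat_agrees_K.
- move=> o phi IH h r Hh Hr /=.
  rewrite (IH h _ Hh (stops_at_rcons o Hr)) IS_Delta ?ohr_Delta //; exact: (proj1 Hh).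
- move=> phi IH pi n r Hp Hr /=.
  rewrite (IH _ r (prefix_upto_history n Hp)) ?hlast_prefix_upto /stops_at_hist ?size_prefix_upto //.
  by rewrite /suffix_from addn0.
- by move=> psi IH pi n r Hp Hr /=; rewrite (IH pi n r Hp Hr).
- by move=> psi1 IH1 psi2 IH2 pi n r Hp Hr /=; rewrite (IH1 pi n r Hp Hr) (IH2 pi n r Hp Hr).
- move=> psi IH pi n r Hp Hr /=.
  by rewrite -addn1; apply: (psat_agrees_shift 1 IH Hp Hr).
- move=> psi1 IH1 psi2 IH2 pi n r Hp Hr /=; rewrite exists_until_shift.
  split=> -[k [H2 H1]]; exists k; split=> [|j Hj].
  all: by [apply/(psat_agrees_shift k IH2 Hp Hr) | apply/(psat_agrees_shift j IH1 Hp Hr); apply: H1].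
Qed.

End Agreement.

Theorem mainTheorem2 (Obs : finType) (M : model Obs) (phi : hform Obs)
    (h : seq (St M)) (r : record Obs) :
  is_history h -> stops_at_hist r h ->
  (hsat h r phi <-> isat (hlast h) (IS h r) (ohr h r) phi).
Proof. exact: (proj1 (sat_agree M) phi h r). Qed.
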